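(* Let $\mathcal{A}$ be a $C^*$-algebra, $\overline{\mathcal{A}}$ its regular monotone completion, and $(\mathcal{V}(\overline{\mathcal{A}}),j)$ the Dedekind completion of the function system $\overline{\mathcal{A}}^{sa}$, with $\mathcal{A}^{sa}\subseteq\overline{\mathcal{A}}^{sa}$ regarded as a subspace of $\mathcal{V}(\overline{\mathcal{A}})$ via $j$. Then $\mathcal{A}^{sa}$ is a regular subspace of $\mathcal{V}(\overline{\mathcal{A}})$, and the embedding $\mathcal{A}^{sa}\hookrightarrow\mathcal{V}(\overline{\mathcal{A}})$ is sup-preserving.
   Context: All $C^*$-algebras are unital; $\mathcal{A}^{sa}$ is the self-adjoint part with order $a\le b\iff b-a\ge0$, which is a function system (Archimedean partially ordered real vector space with order unit $1$). A regular monotone completion of $\mathcal{A}$ is a monotone complete $C^*$-algebra $\overline{\mathcal{A}}$ containing $\mathcal{A}$ as a unital $C^*$-subalgebra such that $\overline{\mathcal{A}}^{sa}$ is the monotone closure of $\mathcal{A}^{sa}$ in $\overline{\mathcal{A}}^{sa}$, every $b\in\overline{\mathcal{A}}^{sa}$ is the supremum in $\overline{\mathcal{A}}^{sa}$ of $\{a\in\mathcal{A}^{sa}:a\le b\}$, and suprema existing in $\mathcal{A}^{sa}$ remain suprema in $\overline{\mathcal{A}}^{sa}$ (exists and unique up to $^*$-isomorphism, Hamana). A subspace $\mathcal{V}$ of a function system $\mathcal{W}$ is regular if every $w\in\mathcal{W}$ equals $\sup_{\mathcal{W}}\{v\in\mathcal{V}:v\le w\}$. An extension of a function system $\mathcal{V}$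 is a pair $(\mathcal{W},j)$ with $j:\mathcal{V}\to\mathcal{W}$ a unital linear order injection (order isomorphism onto its image with $j(1)=1$); it is regular if $j(\mathcal{V})$ is a regular subspace. A Dedekind completion of $\mathcal{V}$ is a regular extension $(\mathcal{W},j)$ with $\mathcal{W}$ a boundedly complete vector lattice (every subset bounded above has a supremum and every subset bounded below has an infimum); it exists and is unique up to linear order isomorphism (Wright). An order injection $j:\mathcal{V}\to\mathcal{W}$ is sup-preserving if whenever $\sup_{\mathcal{V}}\mathcal{F}=v$ for $\mathcal{F}\subseteq\mathcal{V}$, then $\sup_{\mathcal{W}}j(\mathcal{F})=j(v)$. *)

From mathcomp Require Import all_boot all_order all_algebra.
From mathcomp Require Export reals complex.
Set Implicit Arguments. Unset Strict Implicit. Unset Printing Implicit Defensive.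
Import Order.TTheory GRing.Theory Num.Theory.
Local Open Scope ring_scope.

Section CStar.
Variable R : realType.
Local Notation C := R[i].
Variables (A : algType C) (star : A -> A) (nrm : A -> R).

Record is_cstar_algebra : Prop := IsCstarAlgebra {
  cstar_invol : forall a, star (star a) = a;
  cstar_add : forall a b, star (a + b) = star a + star b;
  cstar_scale : forall (c : C) a, star (c *: a) = (c^*)%C *: star a;
  cstar_mul : forall a b, star (a * b) = star b * star a;
  cstar_nrm_ge0 : forall a, 0 <= nrm a;
  cstar_nrm_eq0 : forall a, nrm a = 0 -> a = 0;
  cstar_nrm_triangle : forall a b, nrm (a + b) <= nrm a + nrm b;
  cstar_nrm_scale : forall (c : C) a,
    ((nrm (c *: a))%:C)%C = `|c| * ((nrm a)%:C)%C;
  cstar_nrm_submul : forall a b, nrm (a * b) <= nrm a * nrm b;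
  cstar_complete : forall u : nat -> A,
    (forall e : R, 0 < e -> exists N, forall m n, (N <= m)%N -> (N <= n)%N ->
        nrm (u m - u n) < e) ->
    exists l, forall e : R, 0 < e -> exists N, forall n, (N <= n)%N ->
        nrm (u n - l) < e;
  cstar_identity : forall a, nrm (star a * a) = nrm a ^+ 2
}.

Definition selfadj (a : A) : Prop := star a = a.
Definition positive (a : A) : Prop := exists x, a = star x * x.
Definition cle (a b : A) : Prop := positive (b - a).

Definition sa_ub (F : A -> Prop) (b : A) : Prop :=
  selfadj b /\ forall f, F f -> cle f b.
Definition sa_lb (F : A -> Prop) (b : A) : Prop :=
  selfadj b /\ forall f, F f -> cle b f.
Definition sa_sup (F : A -> Prop) (s : A) : Prop :=
  sa_ub F s /\ forall b, sa_ub F b -> cle s b.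
Definition sa_inf (F : A -> Prop) (s : A) : Prop :=
  sa_lb F s /\ forall b, sa_lb F b -> cle b s.

Definition sa_subset (F : A -> Prop) : Prop := forall f, F f -> selfadj f.
Definition up_directed (F : A -> Prop) : Prop :=
  (exists f, F f) /\
  forall x y, F x -> F y -> exists z, [/\ F z, cle x z & cle y z].
Definition down_directed (F : A -> Prop) : Prop :=
  (exists f, F f) /\
  forall x y, F x -> F y -> exists z, [/\ F z, cle z x & cle z y].

Definition monotone_complete : Prop :=
  forall F, sa_subset F -> up_directed F -> (exists b, sa_ub F b) ->
    exists s, sa_sup F s.

Definition monotone_closed (S : A -> Prop) : Prop :=
  (forall F s, (forall f, F f -> S f) -> up_directed F -> sa_sup F s -> S s) /\
  (forall F s, (forall f, F f -> S f) -> down_directed F -> sa_inf F s -> S s).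

Definition monotone_closure_is_all (X : A -> Prop) : Prop :=
  forall S, sa_subset S -> (forall x, X x -> S x) -> monotone_closed S ->
    forall b, selfadj b -> S b.
End CStar.

Definition unital_star_hom (R : realType) (A B : algType R[i])
    (starA : A -> A) (starB : B -> B) (f : A -> B) : Prop :=
  [/\ forall a b, f (a + b) = f a + f b,
      forall (c : R[i]) a, f (c *: a) = c *: f a,
      forall a b, f (a * b) = f a * f b,
      f 1 = 1 &
      forall a, f (starA a) = starB (f a)].

Definition regular_monotone_completion (R : realType)
    (A : algType R[i]) (starA : A -> A) (nrmA : A -> R)
    (Ab : algType R[i]) (starB : Ab -> Ab) (nrmB : Ab -> R)
    (iota : A -> Ab) : Prop :=
  [/\ is_cstar_algebra starA nrmA /\ is_cstar_algebra starB nrmB,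
      monotone_complete starB /\
      unital_star_hom starA starB iota /\ injective iota,
      monotone_closure_is_all starB
        (fun b => exists a, selfadj starA a /\ b = iota a),
      (forall b, selfadj starB b ->
         sa_sup starB (fun x => exists a, [/\ selfadj starA a, x = iota a &
                                             cle starB (iota a) b]) b) &
      (forall F s, sa_subset starA F -> sa_sup starA F s ->
         sa_sup starB (fun x => exists a, F a /\ x = iota a) (iota s))].

Section OrderedSpace.
Variable R : realType.
Variables (W : lmodType R) (le : W -> W -> Prop) (e : W).

Definition is_ub (F : W -> Prop) (b : W) : Prop := forall f, F f -> le f b.
Definition is_lb (F : W -> Prop) (b : W) : Prop := forall f, F f -> le b f.
Definition is_sup (F : W -> Prop) (s : W) : Prop :=
  is_ub F s /\ forall b, is_ub F b -> le s b.
Definition is_inf (F : W -> Prop) (s : W) : Prop :=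
  is_lb F s /\ forall b, is_lb F b -> le b s.

Definition ordered_vspace : Prop :=
  [/\ forall x, le x x,
      forall x y, le x y -> le y x -> x = y,
      forall x y z, le x y -> le y z -> le x z,
      forall x y z, le x y -> le (x + z) (y + z) &
      forall (r : R) x y, 0 <= r -> le x y -> le (r *: x) (r *: y)].

Definition function_system : Prop :=
  [/\ ordered_vspace,
      forall w, exists r : R, le (- (r *: e)) w /\ le w (r *: e) &
      forall w, (forall r : R, 0 < r -> le w (r *: e)) -> le w 0].

Definition boundedly_complete_vector_lattice : Prop :=
  [/\ ordered_vspace,
      forall x y, exists s, is_sup (fun z => z = x \/ z = y) s,
      forall F, (exists f, F f) -> (exists b, is_ub F b) -> exists s, is_sup F s &
      forall F, (exists f, F f) -> (exists b, is_lb F b) -> exists s, is_inf F s].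
End OrderedSpace.

(* (W, j) is the Dedekind completion of the function system Abar^sa.
   j is a function on Abar; only its values on Abar^sa matter. *)
Definition dedekind_completion_sa (R : realType)
    (Ab : algType R[i]) (starB : Ab -> Ab)
    (W : lmodType R) (le : W -> W -> Prop) (e : W) (j : Ab -> W) : Prop :=
  [/\ function_system le e /\ boundedly_complete_vector_lattice le,
      (forall a b, selfadj starB a -> selfadj starB b -> j (a + b) = j a + j b),
      (forall (r : R) a, selfadj starB a -> j ((r%:C)%C *: a) = r *: j a),
      j 1 = e /\
      (forall a b, selfadj starB a -> selfadj starB b ->
         (cle starB a b <-> le (j a) (j b))) &
      (forall w, is_sup le (fun x => exists v, [/\ selfadj starB v, x = j v & le x w]) w)].

From mathcomp Require Import all_boot all_order all_algebra.
From mathcomp Require Import reals complex.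
Set Implicit Arguments. Unset Strict Implicit. Unset Printing Implicit Defensive.
Import GRing.Theory.
Local Open Scope ring_scope.

(* Since j (Abar^sa) is regular in V and closed under negation, every w in V
   is also the infimum of the j u lying above it.  So x <= b holds in V as
   soon as x <= j u for every u in Abar^sa with b <= j u, which reduces order
   questions in V to order questions in Abar^sa.  Applied to x = j s, this
   shows that j preserves suprema; A^sa is then regular in V because every
   j v below w is the supremum of the j (iota a) below it. *)

Section Involution.
Variables (V : zmodType) (star : V -> V).
Hypothesis starD : forall a b, star (a + b) = star a + star b.

Lemma starN a : star (- a) = - star a.
Proof.
have star0 : star 0 = 0 by apply: (addrI (star 0)); rewrite -starD !addr0.
by apply/eqP; rewrite -addr_eq0 -starD addNr star0.
Qed.

End Involution.

Lemma selfadjN (R : realType) (A : algType R[i]) (star : A -> A) a :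
  (forall a b, star (a + b) = star a + star b) ->
  selfadj star a -> selfadj star (- a).
Proof. by move=> starD sa_a; rewrite /selfadj starN // sa_a. Qed.

Section RegularImage.
Variables (R : realType) (W : lmodType R) (le : W -> W -> Prop).
Hypothesis le_add : forall x y z, le x y -> le (x + z) (y + z).

Lemma le_opp2 x y : le x y -> le (- y) (- x).
Proof.
move=> /(le_add (- x - y)).
by rewrite addrA subrr add0r addrCA subrr addr0.
Qed.

Lemma le_opp2E x y : le (- y) (- x) -> le x y.
Proof. by move/le_opp2; rewrite !opprK. Qed.

Variables (T : Type) (P : T -> Prop) (f : T -> W).
Hypothesis image_oppr_closed : forall t, P t -> exists2 t', P t' & f t' = - f t.
Hypothesis f_regular :
  forall w, is_sup le (fun x => exists t, [/\ P t, x = f t & le x w]) w.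

Lemma regular_is_inf b :
  is_inf le (fun x => exists t, [/\ P t, x = f t & le b x]) b.
Proof.
split=> [_ [t [_ -> //]] | x x_lb].
apply: le_opp2E; apply: (proj2 (f_regular (- b))).
move=> _ [t [Pt -> ftb]]; have [t' Pt' ft'E] := image_oppr_closed Pt.
rewrite -[f t]opprK -ft'E; apply: le_opp2; apply: x_lb.
by exists t'; split => //; rewrite ft'E; apply: le_opp2E; rewrite opprK.
Qed.

End RegularImage.

Section DedekindCompletion.
Variables (R : realType) (Ab : algType R[i]) (starB : Ab -> Ab).
Variables (W : lmodType R) (le : W -> W -> Prop) (e : W) (j : Ab -> W).
Hypothesis starD : forall a b, starB (a + b) = starB a + starB b.
Hypothesis j_completion : dedekind_completion_sa starB le e j.

Let le_trans : forall x y z, le x y -> le y z -> le x z.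
Proof. by case: j_completion => [[[[]]]]. Qed.

Let j_mono a b : selfadj starB a -> selfadj starB b ->
  cle starB a b <-> le (j a) (j b).
Proof. by case: j_completion => _ _ _ [_ j_ord] _; exact: j_ord. Qed.

Lemma dedekind_is_inf b :
  is_inf le (fun x => exists v, [/\ selfadj starB v, x = j v & le b x]) b.
Proof.
case: j_completion => [[[[_ _ _ le_add _] _ _] _] _ jZ _ j_regular].
apply: regular_is_inf => // v sa_v.
exists (- v); first exact: selfadjN.
by have := jZ (-1) v sa_v; rewrite rmorphN1 !scaleN1r.
Qed.

Lemma dedekind_sup_preserving (T : Type) (P : T -> Prop) (g : T -> Ab) s :
  (forall t, P t -> selfadj starB (g t)) ->
  sa_sup starB (fun x => exists t, P t /\ x = g t) s ->
  is_sup le (fun x => exists t, P t /\ x = j (g t)) (j s).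
Proof.
move=> sa_g [[sa_s s_ub] s_least].
split=> [_ [t [Pt ->]] | b b_ub].
  by apply/j_mono; [exact: sa_g | | apply: s_ub; exists t].
apply: (proj2 (dedekind_is_inf b)) => _ [u [sa_u -> b_ju]].
apply/j_mono => //; apply: s_least; split=> // _ [t [Pt ->]].
apply/j_mono; [exact: sa_g | by [] |].
by apply: le_trans b_ju; apply: b_ub; exists t.
Qed.

Lemma dedekind_regular_transfer (T : Type) (P : T -> Prop) (g : T -> Ab) :
  (forall t, P t -> selfadj starB (g t)) ->
  (forall b, selfadj starB b -> sa_sup starB
     (fun x => exists t, [/\ P t, x = g t & cle starB (g t) b]) b) ->
  forall w, is_sup le (fun x => exists t, [/\ P t, x = j (g t) & le x w]) w.
Proof.
move=> sa_g g_regular w.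
split=> [_ [t [_ -> //]] | b b_ub].
case: j_completion => _ _ _ _ j_regular.
apply: (proj2 (j_regular w)) => _ [v [sa_v -> jv_w]].
have sa_gv t : P t /\ cle starB (g t) v -> selfadj starB (g t).
  by case=> /sa_g.
have v_sup : sa_sup starB
    (fun x => exists t, (P t /\ cle starB (g t) v) /\ x = g t) v.
  have [[_ v_ub] v_least] := g_regular v sa_v.
  split=> [|c [sa_c c_ub]]; first split=> // _ [t [[Pt gt_v] ->]].
    by apply: v_ub; exists t.
  by apply: v_least; split=> // _ [t [Pt -> gt_v]]; apply: c_ub; exists t.
have [_ jv_least] := dedekind_sup_preserving sa_gv v_sup.
apply: jv_least => _ [t [[Pt gt_v] ->]].
apply: b_ub; exists t; split=> //.
by apply: le_trans jv_w; apply/j_mono => //; exact: sa_g.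
Qed.

End DedekindCompletion.

Theorem proposition6p4 (R : realType)
    (A : algType R[i]) (starA : A -> A) (nrmA : A -> R)
    (Ab : algType R[i]) (starB : Ab -> Ab) (nrmB : Ab -> R)
    (iota : A -> Ab)
    (W : lmodType R) (leW : W -> W -> Prop) (e : W) (j : Ab -> W) :
  regular_monotone_completion starA nrmA starB nrmB iota ->
  dedekind_completion_sa starB leW e j ->
  (* A^sa is a regular subspace of V(Abar) *)
  (forall w : W, is_sup leW
     (fun x => exists a, [/\ selfadj starA a, x = j (iota a) & leW x w]) w) /\
  (* the embedding A^sa -> V(Abar) is sup-preserving *)
  (forall (F : A -> Prop) (v : A), sa_subset starA F -> selfadj starA v ->
     sa_sup starA F v ->
     is_sup leW (fun x => exists a, F a /\ x = j (iota a)) (j (iota v))).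
Proof.
move=> [[_ cstarB] [_ [[_ _ _ _ iota_star] _]] _ iota_regular iota_sup] j_completion.
have starD := cstar_add cstarB.
have sa_iota a : selfadj starA a -> selfadj starB (iota a).
  by move=> sa_a; rewrite /selfadj -iota_star sa_a.
split=> [|F v sa_F _ v_sup].
  exact: (dedekind_regular_transfer starD j_completion sa_iota iota_regular).
have sa_iotaF a : F a -> selfadj starB (iota a) by move/sa_F/sa_iota.
exact/(dedekind_sup_preserving starD j_completion sa_iotaF)/iota_sup.
Qed.
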